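(* Let $G$ be a finite group and $K$ a field in which $|G|$ is invertible. Let $V\le G$ and let $(f_U)_{U\in\widehat\Sigma_G}=\sigma_G(\Delta(e_V))$. If $U\in\widehat\Sigma_G$ is not isomorphic to $V$ then $f_U=0$. If $U\in\widehat\Sigma_G$ is isomorphic to $V$ then $f_U$ is the projection of $K\overline{\mathrm{Inj}}(U,G)=\bigoplus_{C}K\overline{\mathrm{Inj}}(U,G)_C$ onto the summand indexed by the $G$-conjugacy class $C$ of $V$, where $C$ runs over the $G$-conjugacy classes of subgroups of $G$ isomorphic to $U$ and $K\overline{\mathrm{Inj}}(U,G)_C$ is spanned by the $[\lambda]$ with $\lambda(U)\in C$.
   Context: $B(G)$ is the Burnside ring with marks $\Phi_H([X])=|X^H|$; $e_V\in KB(G)$ is the element with $\Phi_{V'}(e_V)=1$ if $V'$ is $G$-conjugate to $V$ and $0$ otherwise. Finite $(G,G)$-bisets are left $G\times G$-sets via $(g,h)x=gxh^{-1}$; $B^\Delta(G,G)$ is the Grothendieck ring (product induced by $X\times_G Y$) of bisets whose point stabilizers $L$ satisfy $\{g\mid(g,1)\in L\}=\{g\mid(1,g)\in L\}=1$; $\Phi_L$ denotes marks on $G\times G$-sets. $\Delta\colon KB(G)\to KB^\Delta(G,G)$ is the $K$-linear ring homomorphism $[G/W]\mapsto[G\times G/\{(w,w)\mid w\in W\}]$. $\mathrm{Inj}(U,G)$: injective homomorphisms $U\to G$ with $G$ acting by $\lambda\mapsto c_g\lambda$ and $\mathrm{Aut}(U)$ on the right by composition; $\overline{\mathrm{Inj}}(U,G)=G\backslash\mathrm{Inj}(U,G)$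 (elements $[\lambda]$), a right $\mathrm{Out}(U)$-set. $\widehat\Sigma_G$: representatives of isomorphism classes of subgroups of $G$. $\sigma_G\colon KB^\Delta(G,G)\to\prod_{U\in\widehat\Sigma_G}\mathrm{End}_{K\mathrm{Out}(U)}(K\overline{\mathrm{Inj}}(U,G))$ is $a\mapsto\bigl([\mu]\mapsto\sum_{[\lambda]\in\overline{\mathrm{Inj}}(U,G)}\frac{\Phi_{\{(\lambda(u),\mu(u))\mid u\in U\}}(a)}{|C_G(\lambda(U))|}[\lambda]\bigr)_U$. *)

From HB Require Import structures.
From mathcomp Require Import all_boot all_order all_fingroup all_algebra.
Set Implicit Arguments. Unset Strict Implicit. Unset Printing Implicit Defensive.
Import GRing.Theory.
Local Open Scope ring_scope.

(* The finite group G is modelled as the whole of a finGroupType gT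
   (G = [set: gT]); subgroups of G are the {group gT}.
   G x G is the external direct product group (gT * gT). *)

Section Defs.
Variable gT : finGroupType.
Variable K : fieldType.

(* Marks on G-sets / (G x G)-sets: |(A/W)^H| for the left coset space A/W
   (A the whole group) with action by left multiplication. *)
Definition markG (hT : finGroupType) (H W : {set hT}) : nat :=
  #|[set C in lcosets W [set: hT] | [forall h in H, (h *: C)%g == C]]|.

(* An element of KB(G) is represented by coefficients c, standing for
   sum_W c W [G/W].  Its mark at H: *)
Definition PhiB (c : {group gT} -> K) (H : {set gT}) : K :=
  \sum_(W : {group gT}) c W * (markG H W)%:R.

Definition is_eV (V : {group gT}) (c : {group gT} -> K) : Prop :=
  forall H : {group gT},
    PhiB c H = if (H : {set gT}) \in (V :^: [set: gT])%g then 1 else 0.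

Definition diagS (W : {set gT}) : {set (gT * gT)} := [set (w, w) | w in W].

(* Marks of Delta(c) = sum_W c W [G x G / Delta(W)] at L. *)
Definition PhiDelta (c : {group gT} -> K) (L : {set (gT * gT)}) : K :=
  \sum_(W : {group gT}) c W * (markG L (diagS W))%:R.

(* Inj(U,G): injective homomorphisms U -> G, represented as finite functions
   on gT normalised to be 1 outside U. *)
Definition Inj (U : {set gT}) : {set {ffun gT -> gT}} :=
  [set l : {ffun gT -> gT} |
    [&& [forall x in U, forall y in U, l (x * y)%g == (l x * l y)%g],
        [forall x in U, forall y in U, (l x == l y) ==> (x == y)] &
        [forall x in ~: U, l x == 1%g]]].

Definition injorb (U : {set gT}) (l : {ffun gT -> gT}) : {set {ffun gT -> gT}} :=
  [set l' in Inj U | [exists g : gT, [forall u in U, l' u == ((l u) ^ (g^-1))%g]]].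

Definition injbar (U : {set gT}) : {set {set {ffun gT -> gT}}} :=
  [set injorb U l | l in Inj U].

Definition orep (O : {set {ffun gT -> gT}}) : {ffun gT -> gT} :=
  odflt [ffun x => x] [pick l in O].

Definition graphS (U : {set gT}) (l m : {ffun gT -> gT}) : {set (gT * gT)} :=
  [set (l u, m u) | u in U].

(* coefficient of [lambda] in sigma_G(Delta c)_U ([mu]) *)
Definition sigma_coef (c : {group gT} -> K) (U : {set gT}) (l m : {ffun gT -> gT}) : K :=
  PhiDelta c (graphS U l m) / (#|'C(l @: U)%g|)%:R.

(* The U-component f_U of sigma_G(Delta c), as a K-linear endomorphism of
   K\overline{Inj}(U,G); a vector is a finite function on orbits
   (only its values on injbar U matter). *)
Definition sigmaU (c : {group gT} -> K) (U : {set gT})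
    (x : {ffun {set {ffun gT -> gT}} -> K}) : {ffun {set {ffun gT -> gT}} -> K} :=
  [ffun O => if O \in injbar U then
      \sum_(O' in injbar U) x O' * sigma_coef c U (orep O) (orep O')
    else 0].

Definition projV (V : {set gT}) (U : {set gT})
    (x : {ffun {set {ffun gT -> gT}} -> K}) : {ffun {set {ffun gT -> gT}} -> K} :=
  [ffun O => if (O \in injbar U) && ((orep O @: U) \in (V :^: [set: gT])%g)
             then x O else 0].

End Defs.

From mathcomp Require Import all_boot all_order all_fingroup all_algebra.
Set Implicit Arguments. Unset Strict Implicit. Unset Printing Implicit Defensive.

(* For L the graph {(l u, m u) | u in U}, a conjugate L^(a,b) lies in the
   diagonal Delta(W) exactly when (l U)^a <= W and m = c_(b a^-1)^-1 o l.
   Counting such pairs gives Phi_L(Delta c) = |T(l,m)| Phi_(l U)(c), where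
   the transporter T(l,m) = {g | m = c_g^-1 o l} is either empty or a coset of
   C_G(l U).  Dividing by |C_G(l U)| and specialising to c = e_V, the matrix
   of f_U has entry 1 at ([l],[m]) iff [l] = [m] and l U is conjugate to V,
   and 0 otherwise; since l U is isomorphic to U, f_U = 0 unless U ~ V. *)

Open Scope group_scope.

Lemma forall_in_imset (aT rT : finType) (f : aT -> rT) (A : {set aT}) (P : pred rT) :
  [forall y in f @: A, P y] = [forall x in A, P (f x)].
Proof.
apply/forall_inP/forall_inP => PA x Ax; first exact/PA/imset_f.
by case/imsetP: Ax => y Ay ->; apply: PA.
Qed.

Section Marks.
Variable hT : finGroupType.

Lemma lcoset_fixE (W : {group hT}) (y h : hT) :
  (h *: (y *: W) == y *: W) = (h ^ y \in W).
Proof.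
rewrite -lcosetM; apply/eqP/idP => [/lcoset_eqP | hyW].
  by rewrite mem_lcoset conjgE.
by apply/lcoset_eqP; rewrite mem_lcoset -conjgE.
Qed.

(* Each fixed coset yW contributes the |W| elements of yW to the right side. *)
Lemma markG_mul_card (H : {set hT}) (W : {group hT}) :
  (markG H W * #|W|)%N = #|[set x : hT | [forall h in H, h ^ x \in W]]|.
Proof.
set S := [set x : hT | _].
have S_rcoset y w : w \in W -> (y * w \in S) = (y \in S).
  move=> Ww; rewrite !inE; apply: eq_forallb => h.
  by rewrite conjgM (groupJr _ Ww).
rewrite -[RHS]sum1_card (partition_big_imset (fun x => x *: W)) /=.
rewrite (eq_bigr (fun _ => #|W|)); last first.
  move=> _ /imsetP[y Sy ->].
  rewrite -(card_lcoset W y) -sum1_card; apply: eq_bigl => x.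
  apply/andP/idP => [[_ /eqP/lcoset_eqP] //| xy]; split; last exact/eqP/lcoset_eqP.
  by case/lcosetP: xy => w Ww ->; rewrite S_rcoset.
rewrite sum_nat_const /markG; congr muln; apply: eq_card => C.
apply/idP/imsetP => [|[y Sy ->]].
  rewrite inE => /andP[/lcosetsP[y _ ->] /forall_inP fixC]; exists y => //.
  by rewrite inE; apply/forall_inP => h Hh; rewrite -lcoset_fixE; apply: fixC.
rewrite inE; apply/andP; split; first by apply/lcosetsP; exists y.
apply/forall_inP => h Hh; rewrite lcoset_fixE.
by move: Sy; rewrite inE => /forall_inP; apply.
Qed.

End Marks.

Section Diagonal.
Variable gT : finGroupType.

Lemma diagS_group_set (W : {group gT}) : group_set (diagS W).
Proof.
apply/group_setP; split; first by apply/imsetP; exists 1.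
move=> _ _ /imsetP[x Wx ->] /imsetP[y Wy ->].
by apply/imsetP; exists (x * y); rewrite ?groupM.
Qed.

Canonical diagS_group (W : {group gT}) := Group (diagS_group_set W).

Lemma mem_diagS (W : {set gT}) x y : ((x, y) \in diagS W) = (x == y) && (x \in W).
Proof. by apply/imsetP/andP => [[w Ww [-> ->]] | [/eqP -> Wy]]; last exists y. Qed.

Lemma card_diagS (W : {set gT}) : #|diagS W| = #|W|.
Proof. by rewrite card_imset // => x y [->]. Qed.

Definition transporter (U : {set gT}) (l m : gT -> gT) :=
  [set g : gT | [forall u in U, m u == (l u) ^ g^-1]].

Lemma markG_graphS_diagS (U : {set gT}) (l m : {ffun gT -> gT}) (W : {group gT}) :
  markG (graphS U l m) (diagS W) = (markG (l @: U) W * #|transporter U l m|)%N.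
Proof.
apply/eqP; rewrite -(eqn_pmul2r (cardG_gt0 W)) mulnAC; apply/eqP.
rewrite markG_mul_card -[X in (_ * X)%N]card_diagS (markG_mul_card _ (diagS_group W)).
rewrite -cardsX.
pose shear (p : gT * gT) := (p.1, p.2 * p.1).
pose unshear (p : gT * gT) := (p.1, p.2 * p.1^-1).
have shearK : cancel shear unshear by case=> a g; rewrite /shear /unshear /= mulgK.
have unshearK : cancel unshear shear by case=> a g; rewrite /shear /unshear /= mulgKV.
rewrite -(card_imset _ (can_inj shearK)) (can2_imset_pre _ shearK unshearK).
apply: eq_card => -[a b]; rewrite !inE /= !forall_in_imset.
have conj_graph u : ((l u, m u) ^ (a, b) \in diagS W) =
    (l u ^ a \in W) && (m u == l u ^ (b * a^-1)^-1).
  rewrite (_ : (l u, m u) ^ (a, b) = (l u ^ a, m u ^ b)) //.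
  rewrite mem_diagS invMg invgK conjgM andbC; congr andb.
  by rewrite [RHS]eq_sym -[RHS](inj_eq (conjg_inj b)) conjgKV.
apply/forall_inP/andP => [fixL | [/forall_inP lUW /forall_inP Tba] u Uu].
  by split; apply/forall_inP => u Uu; have := fixL u Uu; rewrite conj_graph => /andP[].
by rewrite conj_graph lUW ?Tba.
Qed.

Lemma card_transporter (U : {set gT}) (l m : {ffun gT -> gT}) g0 :
  g0 \in transporter U l m -> #|transporter U l m| = #|'C(l @: U)|.
Proof.
rewrite inE => /forall_inP g0T.
have commuteE (x y : gT) : commute x y <-> x ^ y = x.
  by split => [/commgP/conjg_fixP | /conjg_fixP/commgP].
rewrite -(card_lcoset 'C(l @: U) g0); apply: eq_card => g.
rewrite inE mem_lcoset; apply/forall_inP/centP => [gT_ _ /imsetP[u Uu ->] | cent u Uu].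
  apply/commute_sym/commuteE; rewrite conjgM; apply/eqP.
  by rewrite -(inj_eq (conjg_inj g^-1)) conjgK -(eqP (gT_ u Uu)) (eqP (g0T u Uu)).
rewrite (eqP (g0T u Uu)) -(inj_eq (conjg_inj g)) conjgKV -conjgM.
exact/eqP/commuteE/commute_sym/cent/imset_f.
Qed.

End Diagonal.

Section Injections.
Variables (gT : finGroupType) (U : {group gT}).

Lemma InjP (l : {ffun gT -> gT}) : l \in Inj U ->
  {in U &, {morph l : x y / x * y}} /\ {in U &, injective l}.
Proof.
rewrite inE => /and3P[/forall_inP lM /forall_inP lI _]; split.
  by move=> x y Ux Uy; apply/eqP; move/forall_inP: (lM x Ux); apply.
by move=> x y Ux Uy lxy; move/forall_inP: (lI x Ux) => /(_ y Uy); rewrite lxy eqxx => /eqP.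
Qed.

Lemma Inj_morph1 (l : {ffun gT -> gT}) : l \in Inj U -> l 1 = 1.
Proof.
case/InjP => lM _; apply: (mulgI (l 1)).
by rewrite mulg1 -lM ?mulg1.
Qed.

Lemma Inj_group_set (l : {ffun gT -> gT}) : l \in Inj U -> group_set (l @: U).
Proof.
move=> lI; have [lM _] := InjP lI.
apply/group_setP; split; first by apply/imsetP; exists 1; rewrite ?Inj_morph1.
move=> _ _ /imsetP[x Ux ->] /imsetP[y Uy ->].
by apply/imsetP; exists (x * y); rewrite ?groupM ?lM.
Qed.

Lemma isog_Inj_image (l : {ffun gT -> gT}) (lI : l \in Inj U) :
  U \isog Group (Inj_group_set lI).
Proof.
have [lM linj] := InjP lI; have l1 := Inj_morph1 lI.
apply: (@misom_isog _ _ _ _ l); apply/andP; split; first exact/morphicP.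
apply/eqP/setP => y; rewrite /= !inE.
apply/imsetP/andP => [[x /setD1P[x1 Ux] ->] | [y1 /imsetP[x Ux y_lx]]].
  split; last exact: imset_f.
  by apply: contra x1 => /eqP lx1; apply/eqP/linj; rewrite ?lx1 ?l1.
by exists x; rewrite // inE Ux andbT; apply: contra y1 => /set1P x1; rewrite y_lx x1 l1.
Qed.

Definition conj_rel (l l' : {ffun gT -> gT}) :=
  [exists g : gT, [forall u in U, l' u == (l u) ^ g^-1]].

Lemma conj_relE l l' : conj_rel l l' = (transporter U l l' != set0).
Proof. by apply/existsP/set0Pn => -[g Tg]; exists g; rewrite ?inE in Tg *. Qed.

Lemma conj_rel_refl l : conj_rel l l.
Proof. by apply/existsP; exists 1; apply/forall_inP => u _; rewrite invg1 conjg1. Qed.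

Lemma conj_rel_sym l l' : conj_rel l l' -> conj_rel l' l.
Proof.
case/existsP => g /forall_inP Tg; apply/existsP; exists g^-1.
by apply/forall_inP => u Uu; rewrite (eqP (Tg u Uu)) invgK conjgKV.
Qed.

Lemma conj_rel_trans l1 l2 l3 : conj_rel l1 l2 -> conj_rel l2 l3 -> conj_rel l1 l3.
Proof.
case/existsP => g /forall_inP Tg; case/existsP => h /forall_inP Th.
apply/existsP; exists (h * g); apply/forall_inP => u Uu.
by rewrite (eqP (Th u Uu)) (eqP (Tg u Uu)) invMg conjgM.
Qed.

Lemma mem_injorb l l' : (l' \in injorb U l) = (l' \in Inj U) && conj_rel l l'.
Proof. by rewrite inE. Qed.

Lemma eq_injorb l l' : l \in Inj U -> l' \in Inj U ->
  (injorb U l == injorb U l') = conj_rel l l'.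
Proof.
move=> lI l'I; apply/eqP/idP => [orb_eq | rel_ll'].
  by have := conj_rel_refl l'; rewrite -[conj_rel _ _]andTb -l'I -mem_injorb -orb_eq
    mem_injorb => /andP[].
apply/setP => f; rewrite !mem_injorb; case: (f \in Inj U) => //=.
apply/idP/idP => [rel_lf | rel_l'f]; first exact: conj_rel_trans (conj_rel_sym rel_ll') rel_lf.
exact: conj_rel_trans rel_ll' rel_l'f.
Qed.

Lemma orep_injorb O : O \in injbar U -> orep O \in O.
Proof.
case/imsetP => l lI ->; rewrite /orep; case: pickP => [f -> //|].
by move/(_ l); rewrite mem_injorb lI conj_rel_refl.
Qed.

Lemma orep_Inj O : O \in injbar U -> orep O \in Inj U.
Proof.
move=> OU; have := orep_injorb OU; case/imsetP: OU => l _ ->.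
by rewrite mem_injorb => /andP[].
Qed.

Lemma conj_rel_orep O O' : O \in injbar U -> O' \in injbar U ->
  conj_rel (orep O) (orep O') = (O == O').
Proof.
move=> OU O'U; have := orep_injorb OU; have := orep_injorb O'U.
case/imsetP: OU => l lI ->; case/imsetP: O'U => l' l'I ->.
rewrite !mem_injorb => /andP[_ rel_l'] /andP[_ rel_l].
rewrite eq_injorb //; apply/idP/idP => rel_ll'.
  exact: conj_rel_trans rel_l (conj_rel_trans rel_ll' (conj_rel_sym rel_l')).
exact: conj_rel_trans (conj_rel_sym rel_l) (conj_rel_trans rel_ll' rel_l').
Qed.

End Injections.

Section SigmaOfDeltaE.
Import GRing.Theory.
Local Open Scope ring_scope.
Variables (gT : finGroupType) (K : fieldType).

Lemma PhiDelta_graphS (c : {group gT} -> K) (U : {set gT}) (l m : {ffun gT -> gT}) :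
  PhiDelta c (graphS U l m) = #|transporter U l m|%:R * PhiB c (l @: U).
Proof.
rewrite /PhiDelta /PhiB mulr_sumr; apply: eq_bigr => W _.
by rewrite markG_graphS_diagS natrM [_ * #|_|%:R]mulrC mulrCA.
Qed.

Hypothesis hG : (#|[set: gT]|%:R : K) != 0.

Lemma natr_cardG_neq0 (H : {group gT}) : (#|H|%:R : K) != 0.
Proof.
have /dvdnP[k cardG] := cardSg (subsetT H).
by apply: contraNneq hG => H0; rewrite cardG natrM H0 mulr0.
Qed.

Variables (V : {group gT}) (c : {group gT} -> K).
Hypothesis hc : is_eV V c.

Lemma sigma_coef_eV (U : {group gT}) (l m : {ffun gT -> gT}) : l \in Inj U ->
  sigma_coef c U l m =
    if conj_rel U l m && ((l @: U) \in (V :^: [set: gT])%g) then 1 else 0.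
Proof.
move=> lI; rewrite /sigma_coef PhiDelta_graphS conj_relE.
have [->|/set0Pn[g0 /card_transporter->]] := eqVneq (transporter U l m) set0.
  by rewrite cards0 !mul0r.
rewrite (hc (Group (Inj_group_set lI))) /=.
by case: ifP; rewrite ?mulr0 ?mul0r // mulr1 mulfV ?natr_cardG_neq0.
Qed.

Lemma sigmaU_eV (U : {group gT}) x : sigmaU c U x = projV V U x.
Proof.
apply/ffunP => O; rewrite !ffunE; case OU: (O \in injbar U) => //=.
have coefE := sigma_coef_eV _ (orep_Inj OU).
rewrite (bigD1 O) //= big1 ?addr0 => [|O' /andP[O'U neO]].
  by rewrite coefE conj_rel_refl /=; case: ifP; rewrite ?mulr1 ?mulr0.
by rewrite coefE conj_rel_orep // eq_sym (negbTE neO) mulr0.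
Qed.

End SigmaOfDeltaE.

Local Open Scope ring_scope.

Lemma projV_eq0 (gT : finGroupType) (K : fieldType) (V U : {group gT}) x :
  ~~ (U \isog V) -> projV V U x = [ffun => 0] :> {ffun _ -> K}.
Proof.
move=> notUV; apply/ffunP => O; rewrite !ffunE.
case: ifP => // /andP[OU /imsetP[g _ lU_Vg]]; case/negP: notUV.
have := isog_Inj_image (orep_Inj OU).
have -> : Group (Inj_group_set (orep_Inj OU)) = (V :^ g)%G by apply: val_inj.
by move/isog_trans; apply; rewrite isog_sym conj_isog.
Qed.

Theorem proposition3p7 (gT : finGroupType) (K : fieldType)
    (hG : (#|[set: gT]|%:R : K) != 0)
    (V : {group gT}) (c : {group gT} -> K) (hc : is_eV V c) :
  forall U : {group gT},
    (~~ (U \isog V) -> forall x, sigmaU c U x = [ffun => 0]) /\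
    (U \isog V -> forall x, sigmaU c U x = projV V U x).
Proof.
move=> U; split => [notUV | _] x; rewrite (sigmaU_eV hG hc) //.
exact: projV_eq0.
Qed.
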